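(* Let $\mathcal Q$ be a set of probability measures and $(\mathtt Q_i)_{i\in I}\subseteq\mathcal Q$ a family such that for every $t\in\mathbb N_0$ and $A\in\mathcal F_t$: if $\mathtt Q(A)>0$ for some $\mathtt Q\in\mathcal Q$, then $\mathtt Q_i(A)>0$ for some $i\in I$. Then: (1) if $(\mathfrak p_t)$ is an anytime-valid $p$-value for $\mathcal Q$ and is $\mathtt Q_i$-admissible for each $i\in I$, then it is $\mathcal Q$-admissible; (2) if $(\mathfrak e_t)$ is an anytime-valid $e$-value for $\mathcal Q$ and is $\mathtt Q_i$-admissible for each $i\in I$, then it is $\mathcal Q$-admissible; (3) if $(\psi_t)$ is a $(\mathcal Q,\alpha)$-sequential test and is $\mathtt Q_i$-admissible (as a $(\{\mathtt Q_i\},\alpha)$-sequential test) for each $i\in I$, then it is $\mathcal Q$-admissible.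
   Context: Setup: observations $(X_t)_{t\in\mathbb N}$, an independent $[0,1]$-uniform $U$, filtration $\mathcal F_0=\sigma(U)$, $\mathcal F_t=\sigma(U,X_1,\dots,X_t)$, $\mathcal F_\infty=\sigma(\bigcup_t\mathcal F_t)$; stopping times may be infinite. - Anytime-valid $p$-value for $\mathcal Q$: adapted $[0,1]$-valued $(\mathfrak p_t)_{t\in\mathbb N_0}$ with $\mathtt Q(\mathfrak p_\tau\le\alpha)\le\alpha$ for all stopping times $\tau$, $\mathtt Q\in\mathcal Q$, $\alpha\in[0,1]$ ($\mathfrak p_\infty:=\liminf_t\mathfrak p_t$). Anytime-valid $e$-value: adapted $[0,\infty]$-valued with $\mathtt E_{\mathtt Q}[\mathfrak e_\tau]\le1$ for all stopping times and $\mathtt Q\in\mathcal Q$ ($\mathfrak e_\infty:=\limsup$). $(\mathcal Q,\alpha)$-sequential test: adapted $\{0,1\}$-valued with $\mathtt Q(\psi_\tau=1)\le\alpha$ for all stopping times and $\mathtt Q\in\mathcal Q$. - Admissibility: a $\mathcal Q$-valid $(\mathfrak p_t)$ is $\mathcal Q$-inadmissible if there is a $\mathcal Q$-valid $(\mathfrak p'_t)$ with $\mathtt Q(\mathfrak p'_t\le\mathfrak p_t)=1$ for all $t\in\mathbb N_0$, $\mathtt Q\in\mathcal Q$, and $\mathtt Q(\mathfrak p'_t<\mathfrak p_t)>0$ for some $t$ and some $\mathtt Q\in\mathcal Q$; $\mathcal Q$-admissible otherwise. Analogously for $e$-values and sequential tests with reversed inequalities. For $\mathcal Q=\{\mathtt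 Q\}$ we say $\mathtt Q$-admissible. *)

From HB Require Import structures.
From mathcomp Require Import all_boot all_order all_algebra.
From mathcomp Require Import all_classical all_reals all_analysis.
From mathcomp Require Import measurable_realfun.
Set Implicit Arguments. Unset Strict Implicit. Unset Printing Implicit Defensive.
Import Order.TTheory GRing.Theory Num.Theory.
Local Open Scope classical_set_scope.
Local Open Scope ring_scope.

Section AnytimeValid.
Context {d dT : measure_display} (R : realType).
Context (Omega : measurableType d) (T : measurableType dT).
(* observations X_1, X_2, ... (X 0 is unused) and the randomisation U *)
Context (X : nat -> Omega -> T) (U : Omega -> R).

Definition gen_F (t : nat) : set (set Omega) :=
  [set A | (exists B : set R, measurable B /\ A = U @^-1` B) \/
           (exists (s : nat) (B : set T),
               (1 <= s <= t)%N /\ measurable B /\ A = X s @^-1` B)].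
Definition filt (t : nat) : set (set Omega) := <<s gen_F t >>.

Definition sigmaX : set (set Omega) :=
  <<s [set A | exists (s : nat) (B : set T),
                 (1 <= s)%N /\ measurable B /\ A = X s @^-1` B] >>.

Definition uniform_indep (Q : probability Omega R) : Prop :=
  (forall x : R, 0 <= x <= 1 -> Q [set w | U w <= x] = x%:E) /\
  (forall (B : set R) (A : set Omega), measurable B -> sigmaX A ->
     Q (U @^-1` B `&` A) = (Q (U @^-1` B) * Q A)%E).

(* stopping times, possibly infinite (None = infinity) *)
Definition stopping_time (tau : Omega -> option nat) : Prop :=
  forall t : nat, filt t [set w | exists2 s, tau w = Some s & (s <= t)%N].

Definition adapted_R (p : nat -> Omega -> R) : Prop :=
  forall t (B : set R), measurable B -> filt t (p t @^-1` B).
Definition adapted_eR (e : nat -> Omega -> \bar R) : Prop :=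
  forall (t : nat) (B : set (\bar R)), measurable B -> filt t (e t @^-1` B).
Definition adapted_bool (psi : nat -> Omega -> bool) : Prop :=
  forall t, filt t (psi t @^-1` [set true]).

Definition stopped_p (p : nat -> Omega -> R) (tau : Omega -> option nat)
    (w : Omega) : R :=
  match tau w with Some t => p t w | None => limn_inf (fun t => p t w) end.
Definition stopped_e (e : nat -> Omega -> \bar R) (tau : Omega -> option nat)
    (w : Omega) : \bar R :=
  match tau w with Some t => e t w | None => limn_esup (fun t => e t w) end.
Definition stopped_psi (psi : nat -> Omega -> bool) (tau : Omega -> option nat)
    (w : Omega) : bool :=
  match tau w with
  | Some t => psi t w
  | None => `[< forall N : nat, exists2 t, (N <= t)%N & psi t w >]
  end.

Definition anytime_p (QQ : set (probability Omega R)) (p : nat -> Omega -> R) :=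
  adapted_R p /\ (forall t w, 0 <= p t w <= 1) /\
  forall tau, stopping_time tau -> forall Q, QQ Q -> forall alpha : R,
    0 <= alpha <= 1 ->
    (Q [set w | (stopped_p p tau w <= alpha)%R] <= alpha%:E)%E.

Definition anytime_e (QQ : set (probability Omega R))
    (e : nat -> Omega -> \bar R) :=
  adapted_eR e /\ (forall t w, (0 <= e t w)%E) /\
  forall tau, stopping_time tau -> forall Q, QQ Q ->
    (\int[Q]_w stopped_e e tau w <= 1)%E.

Definition seq_test (QQ : set (probability Omega R)) (alpha : R)
    (psi : nat -> Omega -> bool) :=
  adapted_bool psi /\
  forall tau, stopping_time tau -> forall Q, QQ Q ->
    (Q [set w | stopped_psi psi tau w] <= alpha%:E)%E.

Definition p_admissible (QQ : set (probability Omega R)) (p : nat -> Omega -> R) :=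
  ~ exists p' : nat -> Omega -> R, anytime_p QQ p' /\
    (forall t Q, QQ Q -> Q [set w | (p' t w <= p t w)%R] = 1%E) /\
    (exists t Q, QQ Q /\ (0 < Q [set w | (p' t w < p t w)%R])%E).

Definition e_admissible (QQ : set (probability Omega R))
    (e : nat -> Omega -> \bar R) :=
  ~ exists e' : nat -> Omega -> \bar R, anytime_e QQ e' /\
    (forall t Q, QQ Q -> Q [set w | (e' t w >= e t w)%E] = 1%E) /\
    (exists t Q, QQ Q /\ (0 < Q [set w | (e' t w > e t w)%E])%E).

Definition test_admissible (QQ : set (probability Omega R)) (alpha : R)
    (psi : nat -> Omega -> bool) :=
  ~ exists psi' : nat -> Omega -> bool, seq_test QQ alpha psi' /\
    (forall t Q, QQ Q -> Q [set w | psi t w -> psi' t w] = 1%E) /\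
    (exists t Q, QQ Q /\ (0 < Q [set w | psi' t w /\ ~~ psi t w])%E).

End AnytimeValid.

From HB Require Import structures.
From mathcomp Require Import all_boot all_order all_algebra.
From mathcomp Require Import all_classical all_reals all_analysis.
From mathcomp Require Import measurable_realfun.
Set Implicit Arguments. Unset Strict Implicit. Unset Printing Implicit Defensive.
Import Order.TTheory GRing.Theory Num.Theory.
Local Open Scope classical_set_scope.
Local Open Scope ring_scope.

(* Suppose a candidate f' (a p-value, e-value or sequential test) witnesses
   the QQ-inadmissibility of f: f' is QQ-valid, improves on f almost surely
   under every measure of QQ (on the "weak" comparison events), and improves
   strictly with positive probability at some time t under some measure of
   QQ (on a "strict" comparison event).  The strict event at time t only
   involves f' t and f t, so it lies in F_t; by the covering hypothesis some
   Qi i already charges it.  Validity only weakens when the class of measures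
   shrinks, so f' also witnesses the Qi i-inadmissibility of f, which is
   excluded by assumption. *)

(* Comparison events of processes measurable w.r.t. a generated sigma-algebra
   <<s G >>, obtained by viewing <<s G >> as the measurable type
   [g_sigma_algebraType G]. *)
Section generated_events.
Context (R : realType) (Omega : pointedType) (G : set (set Omega)).

Lemma gen_measurable_fun {d'} {Y : measurableType d'} (f : Omega -> Y) :
  (forall B, measurable B -> <<s G >> (f @^-1` B)) ->
  measurable_fun (setT : set (g_sigma_algebraType G)) f.
Proof. by move=> hf _ B mB; rewrite setTI; exact: hf. Qed.

Lemma gen_ltr (f g : Omega -> R) :
  (forall B, measurable B -> <<s G >> (f @^-1` B)) ->
  (forall B, measurable B -> <<s G >> (g @^-1` B)) ->
  <<s G >> [set w | f w < g w].
Proof.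
move=> hf hg.
have := measurable_fun_ltr (gen_measurable_fun hf) (gen_measurable_fun hg)
  measurableT (I : measurable [set true]).
by rewrite setTI.
Qed.

Lemma gen_lte (f g : Omega -> \bar R) :
  (forall B, measurable B -> <<s G >> (f @^-1` B)) ->
  (forall B, measurable B -> <<s G >> (g @^-1` B)) ->
  <<s G >> [set w | (f w < g w)%E].
Proof.
move=> hf hg.
have := measurable_lte measurableT (gen_measurable_fun hf) (gen_measurable_fun hg).
by rewrite setTI.
Qed.

Lemma gen_and_not (a b : Omega -> bool) :
  <<s G >> (a @^-1` [set true]) -> <<s G >> (b @^-1` [set true]) ->
  <<s G >> [set w | a w /\ ~~ b w].
Proof.
move=> ha hb.
have -> : [set w | a w /\ ~~ b w] = a @^-1` [set true] `&` ~` (b @^-1` [set true]).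
  by apply/seteqP; split=> w /=; case: (a w); case: (b w) => //= -[].
apply: (@measurableI _ (g_sigma_algebraType G)) => //.
exact: (@measurableC _ (g_sigma_algebraType G)).
Qed.

End generated_events.

(* Validity (anytime-valid p-values, e-values, sequential tests) is a
   universal statement over the class of measures, hence antitone in it. *)
Section validity_antitone.
Context {d dT : measure_display} (R : realType).
Context (Omega : measurableType d) (T : measurableType dT).
Variables (X : nat -> Omega -> T) (U : Omega -> R).
Variables (QQ QQ' : set (probability Omega R)).
Hypothesis subQQ : QQ' `<=` QQ.

Lemma anytime_p_sub p : anytime_p X U QQ p -> anytime_p X U QQ' p.
Proof. by case=> ad [bnd va]; do 2!split=> //; move=> tau st Q /subQQ; exact: va. Qed.

Lemma anytime_e_sub e : anytime_e X U QQ e -> anytime_e X U QQ' e.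
Proof. by case=> ad [bnd va]; do 2!split=> //; move=> tau st Q /subQQ; exact: va. Qed.

Lemma seq_test_sub alpha psi : seq_test X U QQ alpha psi -> seq_test X U QQ' alpha psi.
Proof. by case=> ad va; split=> // tau st Q /subQQ; exact: va. Qed.

End validity_antitone.

(* This is the common shape of the three notions of
   inadmissibility, with weak/strict the (non-)strict comparison events. *)
Definition improves_on {d} (R : realType) (Omega : measurableType d)
    (QQ : set (probability Omega R)) (weak strict : nat -> set Omega) : Prop :=
  (forall t Q, QQ Q -> Q (weak t) = 1%E) /\
  (exists t Q, QQ Q /\ (0 < Q (strict t))%E).

Lemma improves_on_cover {d} (R : realType) (Omega : measurableType d)
    (F : nat -> set (set Omega)) (QQ : set (probability Omega R))
    (I : Type) (Qi : I -> probability Omega R) (hQi : forall i, QQ (Qi i))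
    (hcover : forall t A, F t A ->
       (exists Q, QQ Q /\ (0 < Q A)%E) -> exists i, (0 < Qi i A)%E)
    (weak strict : nat -> set Omega) :
  (forall t, F t (strict t)) -> improves_on QQ weak strict ->
  exists i, improves_on [set Qi i] weak strict.
Proof.
move=> Fstrict [hweak [t [Q [QQQ hpos]]]].
have [i hi] := hcover t _ (Fstrict t) (ex_intro _ Q (conj QQQ hpos)).
exists i; split; last by exists t, (Qi i).
by move=> s _ ->; exact: hweak _ _ (hQi i).
Qed.

Section admissibility_localization.
Context {d dT : measure_display} (R : realType).
Context (Omega : measurableType d) (T : measurableType dT).
Variables (X : nat -> Omega -> T) (U : Omega -> R).
Variables (QQ : set (probability Omega R)) (I : Type) (Qi : I -> probability Omega R).
Hypothesis hQi : forall i, QQ (Qi i).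
Hypothesis hcover : forall (t : nat) (A : set Omega), filt X U t A ->
  (exists Q, QQ Q /\ (0 < Q A)%E) -> exists i, (0 < Qi i A)%E.

Lemma Qi_sub i : [set Qi i] `<=` QQ.
Proof. by move=> _ ->; exact: hQi. Qed.

Lemma p_admissible_cover p : anytime_p X U QQ p ->
  (forall i, p_admissible X U [set Qi i] p) -> p_admissible X U QQ p.
Proof.
move=> hp hadm [p' [hp' himp]].
have [i hi] := improves_on_cover hQi hcover
  (fun t => gen_ltr (hp'.1 t) (hp.1 t)) himp.
by apply: (hadm i); exists p'; split; [exact: (anytime_p_sub (@Qi_sub i) hp')|exact: hi].
Qed.

Lemma e_admissible_cover e : anytime_e X U QQ e ->
  (forall i, e_admissible X U [set Qi i] e) -> e_admissible X U QQ e.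
Proof.
move=> he hadm [e' [he' himp]].
have [i hi] := improves_on_cover hQi hcover
  (fun t => gen_lte (he.1 t) (he'.1 t)) himp.
by apply: (hadm i); exists e'; split; [exact: (anytime_e_sub (@Qi_sub i) he')|exact: hi].
Qed.

Lemma test_admissible_cover alpha psi : seq_test X U QQ alpha psi ->
  (forall i, test_admissible X U [set Qi i] alpha psi) ->
  test_admissible X U QQ alpha psi.
Proof.
move=> hpsi hadm [psi' [hpsi' himp]].
have [i hi] := improves_on_cover hQi hcover
  (fun t => gen_and_not (hpsi'.1 t) (hpsi.1 t)) himp.
by apply: (hadm i); exists psi'; split; [exact: (seq_test_sub (@Qi_sub i) hpsi')|exact: hi].
Qed.

End admissibility_localization.

Theorem proposition10 (d dT : measure_display) (R : realType)
  (Omega : measurableType d) (T : measurableType dT)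
  (X : nat -> Omega -> T) (U : Omega -> R)
  (mX : forall s, measurable_fun setT (X s)) (mU : measurable_fun setT U)
  (QQ : set (probability Omega R))
  (hQQ : forall Q, QQ Q -> uniform_indep X U Q)
  (I : Type) (Qi : I -> probability Omega R) (hQi : forall i, QQ (Qi i))
  (hcover : forall (t : nat) (A : set Omega), filt X U t A ->
     (exists Q, QQ Q /\ (0 < Q A)%E) -> exists i, (0 < Qi i A)%E) :
  (forall p : nat -> Omega -> R, anytime_p X U QQ p ->
     (forall i, p_admissible X U [set Qi i] p) -> p_admissible X U QQ p) /\
  (forall e : nat -> Omega -> \bar R, anytime_e X U QQ e ->
     (forall i, e_admissible X U [set Qi i] e) -> e_admissible X U QQ e) /\
  (forall (alpha : R) (psi : nat -> Omega -> bool), seq_test X U QQ alpha psi ->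
     (forall i, test_admissible X U [set Qi i] alpha psi) ->
     test_admissible X U QQ alpha psi).
Proof.
split; [|split].
- exact: p_admissible_cover hQi hcover.
- exact: e_admissible_cover hQi hcover.
- exact: test_admissible_cover hQi hcover.
Qed.
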